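(* Let $G$ be a group and $\mathcal{B}_1,\mathcal{B}_2:G\to G$ maps such that the operation $a\circ b=\mathcal{B}_1(a)b\mathcal{B}_2(a)$ is associative. Then for every $a\in G$, the element $e_a=\mathcal{B}_1(a)^{-1}a\mathcal{B}_2(a)^{-1}$ is a left identity of the semigroup $(G,\circ)$, i.e. $e_a\circ b=b$ for all $b\in G$. Moreover, if $(G,\mathcal{B}_1,\mathcal{B}_2)$ is a Rota-Baxter system of groups, then $\mathcal{B}_1(e_a)=\mathcal{B}_2(e_a)=1_G$ for all $a\in G$.
   Context: A Rota-Baxter system of groups is a triple $(G,\mathcal{B}_1,\mathcal{B}_2)$ where $G$ is a group with identity $1_G$ and $\mathcal{B}_1,\mathcal{B}_2:G\to G$ are maps such that for all $a,b\in G$: $\mathcal{B}_1(a)\mathcal{B}_1(b)=\mathcal{B}_1(\mathcal{B}_1(a)b\mathcal{B}_2(a))$ and $\mathcal{B}_2(b)\mathcal{B}_2(a)=\mathcal{B}_2(\mathcal{B}_1(a)b\mathcal{B}_2(a))$. *)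

Set Implicit Arguments.

Record Group := MkGroup {
  carrier :> Type;
  gmul : carrier -> carrier -> carrier;
  ginv : carrier -> carrier;
  gone : carrier;
  gmulA : forall x y z, gmul x (gmul y z) = gmul (gmul x y) z;
  gmul1l : forall x, gmul gone x = x;
  gmul1r : forall x, gmul x gone = x;
  gmulVl : forall x, gmul (ginv x) x = gone;
  gmulVr : forall x, gmul x (ginv x) = gone
}.

Arguments gmul {g}.
Arguments ginv {g}.
Arguments gone {g}.

Definition rbs_op (G : Group) (B1 B2 : G -> G) (a b : G) : G :=
  gmul (gmul (B1 a) b) (B2 a).

Definition RotaBaxterSystem (G : Group) (B1 B2 : G -> G) : Prop :=
  (forall a b : G, gmul (B1 a) (B1 b) = B1 (gmul (gmul (B1 a) b) (B2 a))) /\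
  (forall a b : G, gmul (B2 b) (B2 a) = B2 (gmul (gmul (B1 a) b) (B2 a))).

Definition rbs_e (G : Group) (B1 B2 : G -> G) (a : G) : G :=
  gmul (gmul (ginv (B1 a)) a) (ginv (B2 a)).

Arguments rbs_op {G}.
Arguments RotaBaxterSystem {G}.
Arguments rbs_e {G}.


(* [e_a] is a right identity for [a] under [∘] for arbitrary maps [B1], [B2].
   Associativity gives [a ∘ (e_a ∘ b) = (a ∘ e_a) ∘ b = a ∘ b], and [a ∘ _] is
   injective, being multiplication by [B1 a] and [B2 a] on either side.  In a
   Rota-Baxter system, applying [B1] (resp. [B2]) to [a ∘ e_a = a] gives
   [B1 a * B1 e_a = B1 a] (resp. [B2 e_a * B2 a = B2 a]), and cancellation
   yields [B1 e_a = B2 e_a = 1]. *)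

Section GroupCancellation.
Variable G : Group.

Lemma gmulI (x y z : G) : gmul x y = gmul x z -> y = z.
Proof.
  intro H. rewrite <- (gmul1l _ y), <- (gmul1l _ z), <- (gmulVl _ x),
    <- !gmulA, H. reflexivity.
Qed.

Lemma gmulIr (x y z : G) : gmul y x = gmul z x -> y = z.
Proof.
  intro H. rewrite <- (gmul1r _ y), <- (gmul1r _ z), <- (gmulVr _ x),
    !gmulA, H. reflexivity.
Qed.

Lemma gmul_eq_l (x y : G) : gmul x y = x -> y = gone.
Proof. intro H. apply (gmulI x). rewrite H, gmul1r. reflexivity. Qed.

Lemma gmul_eq_r (x y : G) : gmul y x = x -> y = gone.
Proof. intro H. apply (gmulIr x). rewrite H, gmul1l. reflexivity. Qed.

End GroupCancellation.

Section RotaBaxterOperation.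
Variables (G : Group) (B1 B2 : G -> G).

Lemma rbs_opI (a b c : G) : rbs_op B1 B2 a b = rbs_op B1 B2 a c -> b = c.
Proof. unfold rbs_op. intro H. exact (gmulI _ _ _ _ (gmulIr _ _ _ _ H)). Qed.

Lemma rbs_op_e_r (a : G) : rbs_op B1 B2 a (rbs_e B1 B2 a) = a.
Proof.
  unfold rbs_op, rbs_e.
  rewrite !gmulA, gmulVr, gmul1l, <- !gmulA, gmulVl, gmul1r. reflexivity.
Qed.

Lemma rbs_op_e_l
  (Hassoc : forall a b c : G,
     rbs_op B1 B2 (rbs_op B1 B2 a b) c = rbs_op B1 B2 a (rbs_op B1 B2 b c))
  (a b : G) : rbs_op B1 B2 (rbs_e B1 B2 a) b = b.
Proof.
  apply (rbs_opI a). rewrite <- Hassoc, rbs_op_e_r. reflexivity.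
Qed.

Lemma RBS_B1_e (HB1 : forall a b : G, gmul (B1 a) (B1 b) = B1 (rbs_op B1 B2 a b))
  (a : G) : B1 (rbs_e B1 B2 a) = gone.
Proof. apply (gmul_eq_l _ (B1 a)). rewrite HB1, rbs_op_e_r. reflexivity. Qed.

Lemma RBS_B2_e (HB2 : forall a b : G, gmul (B2 b) (B2 a) = B2 (rbs_op B1 B2 a b))
  (a : G) : B2 (rbs_e B1 B2 a) = gone.
Proof. apply (gmul_eq_r _ (B2 a)). rewrite HB2, rbs_op_e_r. reflexivity. Qed.

End RotaBaxterOperation.

Arguments rbs_op_e_l {G B1 B2}.
Arguments RBS_B1_e {G B1 B2}.
Arguments RBS_B2_e {G B1 B2}.

Theorem theorem3p6 (G : Group) (B1 B2 : G -> G)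
  (Hassoc : forall a b c : G,
     rbs_op B1 B2 (rbs_op B1 B2 a b) c = rbs_op B1 B2 a (rbs_op B1 B2 b c)) :
  (forall a b : G, rbs_op B1 B2 (rbs_e B1 B2 a) b = b) /\
  (RotaBaxterSystem B1 B2 ->
     forall a : G, B1 (rbs_e B1 B2 a) = gone /\ B2 (rbs_e B1 B2 a) = gone).
Proof.
  split.
  - exact (rbs_op_e_l Hassoc).
  - intros [HB1 HB2] a.
    split; [exact (RBS_B1_e HB1 a) | exact (RBS_B2_e HB2 a)].
Qed.
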